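(* In the setting of ONES (step $\theta>0$, $\widetilde w_1\in\triangle^n$ with positive entries, arbitrary $\ell_t,\widehat\ell_t\in\mathbb R^{n+1}$, updates $\widetilde w_{t+1}=\mathscr N(\widetilde w_t\circ e^{-\theta\ell_t})$, $w_{t+1}=\mathscr N(\widetilde w_{t+1}\circ e^{-\theta\widehat\ell_{t+1}})$), for every $T\ge1$ and every $w\in\triangle^n$, $$\sum_{t=1}^T\langle \ell_t,w_t-w\rangle\le \frac1\theta\sum_i w(i)\ln\frac{w(i)}{\widetilde w_1(i)}+\frac\theta2\sum_{t=1}^T h_{\|\ell_t\|_\infty}\big(\|\ell_t-\widehat\ell_t\|_\infty\big),$$ where $h_\sigma(\delta)=\delta^2-(|\delta|-|\sigma|)_+^2$.
   Context: $\triangle^n=\{w\in\mathbb R_+^{n+1}:\|w\|_1=1\}$; $\circ$ is the Hadamard product; $\mathscr N(u)=u/\|u\|_1$; $w_1=\mathscr N(\widetilde w_1\circ e^{-\theta\widehat\ell_1})$; $(a)_+=\max\{a,0\}$; $0\ln0=0$. *)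

From HB Require Import structures.
From mathcomp Require Import all_boot all_order all_algebra.
From mathcomp Require Import all_classical all_reals all_analysis.
Set Implicit Arguments. Unset Strict Implicit. Unset Printing Implicit Defensive.
Import Order.TTheory GRing.Theory Num.Theory.
Local Open Scope ring_scope.

Section ONES.
Variables (R : realType) (n : nat).

Definition vec := 'I_n.+1 -> R.

Definition in_simplex (w : vec) : Prop :=
  (forall i, 0 <= w i) /\ \sum_i w i = 1.

(* N(u) = u / ||u||_1 (applied only to positive vectors) *)
Definition normalize (u : vec) : vec := fun i => u i / \sum_j `|u j|.

Definition expmul (theta : R) (u l : vec) : vec := fun i => u i * expR (- theta * l i).

Definition inner (u v : vec) : R := \sum_i u i * v i.

Definition linf (u : vec) : R := \big[Num.max/0]_i `|u i|.

Definition hfun (sigma delta : R) : R :=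
  delta ^+ 2 - (Num.max (`|delta| - `|sigma|) 0) ^+ 2.

Definition KL (w v : vec) : R :=
  \sum_i (if w i == 0 then 0 else w i * ln (w i / v i)).

(* wtil_aux k = \widetilde w_{k+1}; losses ell t indexed from t = 1 *)
Fixpoint wtil_aux (theta : R) (wt1 : vec) (ell : nat -> vec) (k : nat) : vec :=
  match k with
  | 0 => wt1
  | k'.+1 => normalize (expmul theta (wtil_aux theta wt1 ell k') (ell k))
  end.

Definition wtil theta wt1 ell (t : nat) : vec := wtil_aux theta wt1 ell t.-1.

Definition wpred theta wt1 ell (ellhat : nat -> vec) (t : nat) : vec :=
  normalize (expmul theta (wtil theta wt1 ell t) (ellhat t)).

End ONES.

From mathcomp Require Import all_boot all_order all_algebra.
From mathcomp Require Import all_classical all_reals all_analysis.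
From mathcomp Require Import ring lra.
Set Implicit Arguments. Unset Strict Implicit. Unset Printing Implicit Defensive.
Import Order.TTheory GRing.Theory Num.Theory.
Import numFieldNormedType.Exports.
Local Open Scope ring_scope.

(* Both updates are exponential tilts p |-> p e^f / E_p[e^f], and one update
   of the reference distribution wt_t changes KL(w || .) by exactly
   theta <l_t, w> + ln E_{wt_t}[e^(-theta l_t)], so the regret telescopes to
   KL(w || wt_1) / theta plus the per-round terms
   <l_t, w_t> + theta^-1 ln E_{wt_t}[e^(-theta l_t)].
   Each of these is bounded with Hoeffding's lemma and Gibbs' variational
   principle, which give theta delta^2 / 2 for a prediction error delta.  When
   delta exceeds sigma = |l_t|_oo, the tilt from the prediction to the loss is
   split into tilts of relative sizes sigma/delta and (delta-sigma)/delta,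
   which improves delta^2 to delta^2 - (delta - sigma)^2. *)

Section HoeffdingTwoPoint.
Context {R : realType}.

Lemma is_derive_ge0_le (f df : R -> R) (a b : R) : a <= b ->
  (forall x, is_derive x (1:R) f (df x)) -> (forall x, a < x < b -> 0 <= df x) ->
  f a <= f b.
Proof.
move=> ab fd df_ge0; case: (ltgtP a b) ab => // [altb|->] _; last by [].
have [|c cab fE] := MVT altb (fun x _ => fd x).
  apply/continuous_subspaceT => x.
  by apply/differentiable_continuous/derivable1_diffP; have [] := fd x.
by rewrite -subr_ge0 fE mulr_ge0 ?subr_ge0 ?(ltW altb) // df_ge0 // !(itvP cab).
Qed.

Lemma is_derive_expRN (x : R) : is_derive x (1:R) (fun y => expR (- y)) (- expR (- x)).
Proof.
have := is_derive1_comp (is_derive_expR (- x)) (is_deriveNid x 1).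
by rewrite mulrN1.
Qed.

Variable a : R.

(* twice the moment generating function of the +-1 variable of mean a *)
Definition pm1_mgf (x : R) := (1 + a) * expR x + (1 - a) * expR (- x).
Definition pm1_mgf' (x : R) := (1 + a) * expR x - (1 - a) * expR (- x).

Lemma is_derive_pm1_mgf x : is_derive x (1:R) pm1_mgf (pm1_mgf' x).
Proof.
have -> : pm1_mgf = (1 + a) *: (expR : R -> R) + (1 - a) *: (fun y => expR (- y)) by [].
apply: (is_derive_eq (is_deriveD (is_deriveZ (1 + a) (is_derive_expR x))
  (is_deriveZ (1 - a) (is_derive_expRN x)))).
by rewrite /pm1_mgf' /GRing.scale /= mulrN.
Qed.

Lemma is_derive_pm1_mgf' x : is_derive x (1:R) pm1_mgf' (pm1_mgf x).
Proof.
have -> : pm1_mgf' = (1 + a) *: (expR : R -> R) - (1 - a) *: (fun y => expR (- y)) by [].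
apply: (is_derive_eq (is_deriveB (is_deriveZ (1 + a) (is_derive_expR x))
  (is_deriveZ (1 - a) (is_derive_expRN x)))).
by rewrite /pm1_mgf /GRing.scale /= mulrN opprK.
Qed.

Hypothesis a_bound : -1 <= a <= 1.

Lemma pm1_mgf_gt0 x : 0 < pm1_mgf x.
Proof.
have := expR_gt0 x; have := expR_gt0 (- x); move: a_bound => /andP[].
rewrite /pm1_mgf; nra.
Qed.

(* The logarithmic derivative of x |-> pm1_mgf x * expR (- a x - x^2/2) is - pm1_slack x. *)
Definition pm1_slack (x : R) := a + x - pm1_mgf' x / pm1_mgf x.

Lemma pm1_slack_ge0 x : 0 <= x -> 0 <= pm1_slack x.
Proof.
move=> x_ge0.
have slack0 : pm1_slack 0 = 0 by rewrite /pm1_slack /pm1_mgf /pm1_mgf' oppr0 expR0; field; lra.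
rewrite -slack0; apply: (is_derive_ge0_le (df := fun y => (pm1_mgf' y / pm1_mgf y) ^+ 2) x_ge0)
  => [y|y _]; last exact: sqr_ge0.
have mgf_neq0 := lt0r_neq0 (pm1_mgf_gt0 y).
apply: (is_derive_eq (is_deriveB (is_deriveD (is_derive_cst a y 1) (is_derive_id y (1:R)))
  (is_deriveM (is_derive_pm1_mgf' y) (is_deriveV mgf_neq0 (is_derive_pm1_mgf y))))).
by rewrite /GRing.scale /=; field.
Qed.

Lemma pm1_mgf_le x : 0 <= x -> pm1_mgf x <= 2 * expR (a * x + x ^+ 2 / 2).
Proof.
move=> x_ge0; set g := fun y => - (a * y + y ^+ 2 / 2).
have dg y : is_derive y (1:R) g (- (a + y)).
  have -> : g = - (a *: id + 2^-1 *: id ^+ 2).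
    by apply/funext => z; rewrite /g /= !fctE /= /GRing.scale /= [_ / 2]mulrC.
  apply: (is_derive_eq (is_deriveN (is_deriveD (is_deriveZ a (is_derive_id y (1:R)))
     (is_deriveZ 2^-1 (is_deriveX 2 (is_derive_id y (1:R))))))).
  by rewrite /GRing.scale /=; field.
suff decr : pm1_mgf x * expR (g x) <= pm1_mgf 0 * expR (g 0).
  move: decr; rewrite /g /pm1_mgf mulr0 add0r expr0n /= mul0r oppr0 expR0 !mulr1.
  by rewrite [expR (- (_ + _))]expRN ler_pdivrMr ?expR_gt0 // addrACA subrr addr0; lra.
rewrite -lerN2; apply: (is_derive_ge0_le (f := fun y => - (pm1_mgf y * expR (g y)))
  (df := fun y => pm1_mgf y * pm1_slack y * expR (g y)) x_ge0) => [y|y /andP[y_gt0 _]].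
  have mgf_neq0 := lt0r_neq0 (pm1_mgf_gt0 y).
  apply: (is_derive_eq (is_deriveN (is_deriveM (is_derive_pm1_mgf y)
    (is_derive1_comp (is_derive_expR (g y)) (dg y))))).
  by rewrite /pm1_slack /GRing.scale /=; field.
by rewrite !mulr_ge0 ?expR_ge0 ?pm1_slack_ge0 ?ltW ?pm1_mgf_gt0.
Qed.

End HoeffdingTwoPoint.

Lemma expR_le_chord (R : realType) (c z : R) : 0 < c -> -c <= z <= c ->
  expR z <= (expR c + expR (- c)) / 2 + (expR c - expR (- c)) / (2 * c) * z.
Proof.
move=> c_gt0 /andP[zlo zhi]; set t := (c + z) / (2 * c).
have t_ge0 : 0 <= t by apply: divr_ge0; lra.
have t_le1 : t <= 1 by rewrite ler_pdivrMr; lra.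
have -> : (expR c + expR (- c)) / 2 + (expR c - expR (- c)) / (2 * c) * z
        = t * expR c + (1 - t) * expR (- c) by rewrite /t; field; lra.
have {1}-> : z = t * c + (1 - t) * - c by rewrite /t; field; lra.
by have := convex_expR (Itv01 t_ge0 t_le1) c (- c); rewrite !convRE.
Qed.

Section FiniteDistributions.
Context {R : realType} {I : finType}.
Implicit Types (p q f g : I -> R).

Definition mean p f := \sum_i p i * f i.
Definition mgf p f := \sum_i p i * expR (f i).
Definition tilt p f : I -> R := fun i => p i * expR (f i) / mgf p f.
Definition relent q p := \sum_i (if q i == 0 then 0 else q i * ln (q i / p i)).

Lemma meanZ q f k : mean q (fun i => k * f i) = k * mean q f.
Proof. by rewrite /mean mulr_sumr; apply: eq_bigr => i _; ring. Qed.

Lemma meanN q f : mean q (fun i => - f i) = - mean q f.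
Proof. by rewrite /mean -sumrN; apply: eq_bigr => i _; rewrite mulrN. Qed.

Lemma mean_affine p f al be : \sum_i p i = 1 ->
  mean p (fun i => al + be * f i) = al + be * mean p f.
Proof.
move=> p_sum1; rewrite /mean mulr_sumr -[al in RHS]mulr1 -p_sum1 mulr_sumr -big_split /=.
by apply: eq_bigr => i _; ring.
Qed.

Lemma mgf_const0 p : \sum_i p i = 1 -> mgf p (fun _ => 0) = 1.
Proof. by move=> p_sum1; rewrite /mgf -[RHS]p_sum1; apply: eq_bigr => i _; rewrite expR0 mulr1. Qed.

Section Hoeffding.
Variables (p f : I -> R) (c : R).
Hypotheses (p_ge0 : forall i, 0 <= p i) (p_sum1 : \sum_i p i = 1).
Hypotheses (c_ge0 : 0 <= c) (f_bound : forall i, `|f i| <= c).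

Lemma mean_norm_le : `|mean p f| <= c.
Proof.
apply: le_trans (ler_norm_sum _ _ _) _.
rewrite -[c]mul1r -p_sum1 mulr_suml; apply: ler_sum => i _.
by rewrite normrM ger0_norm // ler_wpM2l.
Qed.

Lemma hoeffding : mgf p f <= expR (mean p f + c ^+ 2 / 2).
Proof.
have [c_gt0|c_eq0] : 0 < c \/ c = 0 by case: (ltgtP c 0) c_ge0 => // *; [left|right].
  set al := (expR c + expR (- c)) / 2; set be := (expR c - expR (- c)) / (2 * c).
  have chord i : expR (f i) <= al + be * f i.
    by apply: expR_le_chord; rewrite // -ler_norml f_bound.
  have := mean_norm_le; rewrite ler_norml => /andP[m_lo m_hi].
  have a_bound : -1 <= mean p f / c <= 1.
    by rewrite ler_pdivlMr // ler_pdivrMr // mulN1r mul1r m_lo m_hi.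
  apply: (le_trans (y := al + be * mean p f)).
    by rewrite -mean_affine //; apply: ler_sum => i _; rewrite ler_wpM2l.
  have := pm1_mgf_le a_bound (ltW c_gt0); rewrite divfK ?lt0r_neq0 //.
  have -> : al + be * mean p f = pm1_mgf (mean p f / c) c / 2.
    by rewrite /al /be /pm1_mgf; field; rewrite lt0r_neq0.
  lra.
have -> : f = (fun _ => 0).
  by apply/funext => i; apply/normr0_eq0/eqP; rewrite eq_le normr_ge0 -c_eq0 f_bound.
rewrite mgf_const0 // /mean big1 => [|i _]; last by rewrite mulr0.
by rewrite c_eq0 expr0n /= mul0r !addr0 expR0.
Qed.

End Hoeffding.

Lemma mul_ln_div_le (x y : R) : 0 < x -> 0 < y -> x * ln (y / x) <= y - x.
Proof.
move=> x_gt0 y_gt0; have yx_gt0 := divr_gt0 y_gt0 x_gt0.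
have ln_le : ln (y / x) <= y / x - 1.
  by have := @le_ln1Dx R (y / x - 1); rewrite addrCA subrr addr0; apply; lra.
apply: le_trans (ler_wpM2l (ltW x_gt0) ln_le) _.
by rewrite mulrBr mulr1 [x * _]mulrC divfK ?lt0r_neq0.
Qed.

Section Tilting.
Variable p : I -> R.
Hypotheses (p_gt0 : forall i, 0 < p i) (p_sum1 : \sum_i p i = 1).

Lemma mgf_gt0 f : 0 < mgf p f.
Proof.
case: (pickP (@predT I)) => [i0 _|I0]; last first.
  by move: p_sum1; rewrite big_pred0 // => /eqP; rewrite eq_sym oner_eq0.
rewrite /mgf (bigD1 i0) //= ltr_pwDl ?mulr_gt0 ?expR_gt0 //.
by apply: sumr_ge0 => i _; rewrite mulr_ge0 ?expR_ge0 ?ltW.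
Qed.

Lemma tilt_gt0 f i : 0 < tilt p f i.
Proof. by rewrite divr_gt0 ?mulr_gt0 ?expR_gt0 ?mgf_gt0. Qed.

Lemma tilt_sum1 f : \sum_i tilt p f i = 1.
Proof. by rewrite -mulr_suml mulfV // lt0r_neq0 ?mgf_gt0. Qed.

Lemma mgf_tilt f g : mgf (tilt p f) g = mgf p (fun i => f i + g i) / mgf p f.
Proof.
rewrite /mgf mulr_suml; apply: eq_bigr => i _.
by rewrite /tilt expRD mulrA mulrAC.
Qed.

Lemma tilt_tilt f g : tilt (tilt p f) g = tilt p (fun i => f i + g i).
Proof.
apply/funext => i; rewrite {1}/tilt mgf_tilt /tilt expRD.
by field; rewrite !lt0r_neq0 ?mgf_gt0.
Qed.

Lemma ln_mgf_tiltN f : ln (mgf (tilt p f) (fun i => - f i)) = - ln (mgf p f).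
Proof.
rewrite mgf_tilt; have -> : mgf p (fun i => f i + - f i) = 1.
  by rewrite -(mgf_const0 p_sum1); apply: eq_bigr => i _; rewrite subrr.
by rewrite mul1r lnV ?posrE ?mgf_gt0.
Qed.

Lemma ln_tilt f i : ln (tilt p f i) = ln (p i) + f i - ln (mgf p f).
Proof. by rewrite /tilt ln_div ?lnM ?expRK ?posrE ?mulr_gt0 ?expR_gt0 ?mgf_gt0. Qed.

Lemma relent_tilt_l f : relent (tilt p f) p = mean (tilt p f) f - ln (mgf p f).
Proof.
rewrite /relent /mean -[ln (mgf _ _)]mul1r -(tilt_sum1 f) mulr_suml -sumrB.
apply: eq_bigr => i _; rewrite gt_eqF ?tilt_gt0 //.
by rewrite ln_div ?posrE ?tilt_gt0 // ln_tilt; ring.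
Qed.

Section Relent.
Variable q : I -> R.
Hypotheses (q_ge0 : forall i, 0 <= q i) (q_sum1 : \sum_i q i = 1).

Lemma relent_tilt_r f : relent q (tilt p f) = relent q p - mean q f + ln (mgf p f).
Proof.
rewrite -[ln (mgf _ _)]mul1r -q_sum1 mulr_suml /relent /mean -sumrB -big_split /=.
apply: eq_bigr => i _; case: eqP => [->|/eqP q_neq0]; first by rewrite !mul0r subr0 addr0.
have q_gt0 : 0 < q i by rewrite lt_def q_neq0 q_ge0.
by rewrite [ln (_ / tilt _ _ _)]ln_div ?posrE ?tilt_gt0 // ln_tilt ln_div ?posrE //; ring.
Qed.

Lemma gibbs_variational f : mean q f - relent q p <= ln (mgf p f).
Proof.
suff : \sum_i (q i * f i - (if q i == 0 then 0 else q i * ln (q i / p i))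
                - q i * ln (mgf p f)) <= \sum_i (tilt p f i - q i).
  by rewrite !sumrB tilt_sum1 q_sum1 subrr -mulr_suml q_sum1 mul1r subr_le0.
apply: ler_sum => i _; case: eqP => [->|/eqP q_neq0].
  by rewrite !mul0r !subr0 ltW ?tilt_gt0.
have q_gt0 : 0 < q i by rewrite lt_def q_neq0 q_ge0.
apply: le_trans (mul_ln_div_le q_gt0 (tilt_gt0 f i)).
rewrite [ln (tilt _ _ _ / _)]ln_div ?posrE ?tilt_gt0 // ln_tilt ln_div ?posrE //; lra.
Qed.

Lemma relent_ge0 : 0 <= relent q p.
Proof.
have := gibbs_variational (fun _ => 0); rewrite mgf_const0 // ln1 /mean big1 => [|i _].
  by rewrite sub0r oppr_le0.
exact: mulr0.
Qed.

End Relent.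

Lemma ln_mgf_le f c : 0 <= c -> (forall i, `|f i| <= c) ->
  ln (mgf p f) <= mean p f + c ^+ 2 / 2.
Proof.
move=> c_ge0 f_bound; rewrite -[mean p f + _]expRK ler_ln ?posrE ?mgf_gt0 ?expR_gt0 //.
by apply: hoeffding => // i; exact: ltW.
Qed.

End Tilting.

Section TiltedMeans.
Variables (p g : I -> R) (c : R).
Hypotheses (p_gt0 : forall i, 0 < p i) (p_sum1 : \sum_i p i = 1).
Hypotheses (c_ge0 : 0 <= c) (g_bound : forall i, `|g i| <= c).

Lemma relent_tilt_le : relent (tilt p g) p <= c ^+ 2 / 2.
Proof.
have := ln_mgf_le (tilt_gt0 p_gt0 p_sum1 g) (tilt_sum1 p_gt0 p_sum1 g) c_ge0
  (f := fun i => - g i) (fun i => ltac:(by rewrite normrN)).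
by rewrite ln_mgf_tiltN // meanN relent_tilt_l //; lra.
Qed.

Lemma mean_tilt_le f : mean (tilt p g) f <= ln (mgf p f) + c ^+ 2 / 2.
Proof.
have := gibbs_variational p_gt0 p_sum1 (fun i => ltW (tilt_gt0 p_gt0 p_sum1 g i))
  (tilt_sum1 p_gt0 p_sum1 g) f.
have := relent_tilt_le; lra.
Qed.

End TiltedMeans.

Lemma norm_scale_le (f : I -> R) k c : 0 <= k -> (forall i, `|f i| <= c) ->
  forall i, `|k * f i| <= k * c.
Proof. by move=> k_ge0 f_bound i; rewrite normrM ger0_norm // ler_wpM2l. Qed.

Section OptimisticStep.
Variables (mu X d : I -> R) (sg dl : R).
Hypotheses (mu_gt0 : forall i, 0 < mu i) (mu_sum1 : \sum_i mu i = 1).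
Hypotheses (X_bound : forall i, `|X i| <= sg) (d_bound : forall i, `|d i| <= dl).

(* The tilt by d is split into tilts by (sg/dl) d and ((dl-sg)/dl) d, and the
   bound of [ln_mgf_le] is applied to the intermediate distribution at the
   scale (dl-sg)/sg that balances the three quadratic terms. *)
Lemma mean_tilt_sub_ln_mgf_lt : 0 < sg < dl ->
  mean (tilt mu d) X - ln (mgf mu X) <= (dl ^+ 2 - (dl - sg) ^+ 2) / 2.
Proof.
move=> /andP[sg_gt0 sg_lt_dl]; have dl_gt0 : 0 < dl by lra.
set s := sg / dl; set r := (dl - sg) / dl; set la := (dl - sg) / sg.
have s_ge0 : 0 <= s by rewrite divr_ge0 ?ltW.
have r_ge0 : 0 <= r by rewrite divr_ge0 ?subr_ge0 ?ltW.
have la_gt0 : 0 < la by rewrite divr_gt0 ?subr_gt0.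
set nu := tilt mu (fun i => s * d i).
have nu_gt0 := tilt_gt0 mu_gt0 mu_sum1 (fun i => s * d i).
have nu_sum1 := tilt_sum1 mu_gt0 mu_sum1 (fun i => s * d i).
have tilt_split : tilt mu d = tilt nu (fun i => r * d i).
  by rewrite tilt_tilt //; congr tilt; apply/funext => i; rewrite /s /r; field; lra.
have le_nu := mean_tilt_le mu_gt0 mu_sum1 (mulr_ge0 s_ge0 (ltW dl_gt0))
  (norm_scale_le s_ge0 d_bound) X.
have le_mu := mean_tilt_le nu_gt0 nu_sum1 (mulr_ge0 r_ge0 (ltW dl_gt0))
  (norm_scale_le r_ge0 d_bound) (fun i => la * X i).
have le_mgf := ln_mgf_le nu_gt0 nu_sum1 (mulr_ge0 (ltW la_gt0) (ltW sg_gt0))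
  (norm_scale_le (ltW la_gt0) X_bound).
rewrite -tilt_split !meanZ in le_mu le_mgf.
have la_le := ler_wpM2l (ltW la_gt0) le_nu.
rewrite -(ler_pM2l la_gt0).
have -> : la * ((dl ^+ 2 - (dl - sg) ^+ 2) / 2) =
  la * ((s * dl) ^+ 2 / 2) + (la * sg) ^+ 2 / 2 + (r * dl) ^+ 2 / 2.
  by rewrite /la /s /r; field; lra.
lra.
Qed.

Lemma mean_tilt_sub_ln_mgf_le : 0 <= sg -> 0 <= dl ->
  mean (tilt mu d) X - ln (mgf mu X) <= hfun sg dl / 2.
Proof.
move=> sg_ge0 dl_ge0; rewrite /hfun !ger0_norm //.
have [dl_le_sg|sg_lt_dl] := leP dl sg.
  have -> : Num.max (dl - sg) 0 = 0 by apply/max_idPr; lra.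
  by have := mean_tilt_le mu_gt0 mu_sum1 dl_ge0 d_bound X; rewrite expr0n /= subr0; lra.
have -> : Num.max (dl - sg) 0 = dl - sg by apply/max_idPl; lra.
have [sg_eq0|sg_gt0] := eqVneq sg 0; last first.
  by apply: mean_tilt_sub_ln_mgf_lt; rewrite sg_lt_dl lt_def sg_gt0 sg_ge0.
have -> : X = (fun _ => 0).
  by apply/funext => i; apply/normr0_eq0/eqP; rewrite eq_le normr_ge0 -sg_eq0 X_bound.
rewrite mgf_const0 // ln1 /mean big1 => [|i _]; last exact: mulr0.
by rewrite sg_eq0 !subr0 subrr mul0r.
Qed.

End OptimisticStep.

Lemma optimistic_step p X Y sg dl : (forall i, 0 < p i) -> \sum_i p i = 1 ->
  0 <= sg -> 0 <= dl -> (forall i, `|X i| <= sg) -> (forall i, `|X i - Y i| <= dl) ->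
  mean (tilt p (fun i => - Y i)) X + ln (mgf p (fun i => - X i)) <= hfun sg dl / 2.
Proof.
move=> p_gt0 p_sum1 sg_ge0 dl_ge0 X_bound XY_bound.
set mu := tilt p (fun i => - X i).
have -> : tilt p (fun i => - Y i) = tilt mu (fun i => X i - Y i).
  by rewrite tilt_tilt //; congr tilt; apply/funext => i; ring.
have -> : ln (mgf p (fun i => - X i)) = - ln (mgf mu X).
  have -> : mgf mu X = mgf mu (fun i => - - X i) by apply: eq_bigr => i _; rewrite opprK.
  by rewrite ln_mgf_tiltN // opprK.
exact: mean_tilt_sub_ln_mgf_le (tilt_gt0 p_gt0 p_sum1 _) (tilt_sum1 p_gt0 p_sum1 _)
  X_bound XY_bound sg_ge0 dl_ge0.
Qed.

End FiniteDistributions.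

Section ONES.
Context {R : realType} {n : nat}.
Implicit Types (p q w l lh u : 'I_n.+1 -> R) (ell : nat -> 'I_n.+1 -> R) (theta : R).

Lemma KLE w p : KL w p = relent w p.
Proof. by []. Qed.

Lemma inner_subr l q w : inner l (fun i => q i - w i) = mean q l - mean w l.
Proof. by rewrite /inner /mean -sumrB; apply: eq_bigr => i _; ring. Qed.

Lemma linf_ge u i : `|u i| <= linf u.
Proof. exact: le_bigmax. Qed.

Lemma linf_ge0 u : 0 <= linf u.
Proof. exact: le_trans (normr_ge0 _) (linf_ge u ord0). Qed.

Lemma hfunZ (k s d : R) : hfun (k * s) (k * d) = k ^+ 2 * hfun s d.
Proof.
rewrite /hfun !normrM -mulrBr -[X in Num.max _ X](mulr0 `|k|) -maxr_pMr //.
by rewrite !exprMn real_normK ?num_real // mulrBr.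
Qed.

Lemma normalize_expmul theta p l : (forall i, 0 <= p i) ->
  normalize (expmul theta p l) = tilt p (fun i => - (theta * l i)).
Proof.
move=> p_ge0; apply/funext => i; rewrite /normalize /expmul /tilt /mgf mulNr.
by congr (_ / _); apply: eq_bigr => j _; rewrite mulNr ger0_norm ?mulr_ge0 ?expR_ge0.
Qed.

Lemma wtil_aux_pos_sum1 theta (wt1 : 'I_n.+1 -> R) ell k :
  (forall i, 0 < wt1 i) -> \sum_i wt1 i = 1 ->
  (forall i, 0 < wtil_aux theta wt1 ell k i) /\ \sum_i wtil_aux theta wt1 ell k i = 1.
Proof.
move=> wt1_gt0 wt1_sum1; elim: k => [|k [wk_gt0 wk_sum1]] //=.
rewrite normalize_expmul => [|i]; last exact: ltW.
by split; [exact: tilt_gt0 | exact: tilt_sum1].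
Qed.

Lemma ones_round_le theta p l lh w : 0 < theta ->
  (forall i, 0 < p i) -> \sum_i p i = 1 -> in_simplex w ->
  theta * inner l (fun i => normalize (expmul theta p lh) i - w i)
  <= KL w p - KL w (normalize (expmul theta p l))
     + theta ^+ 2 / 2 * hfun (linf l) (linf (fun i => l i - lh i)).
Proof.
move=> theta_gt0 p_gt0 p_sum1 [w_ge0 w_sum1].
have p_ge0 i := ltW (p_gt0 i).
have scaled_bound u i : `|theta * u i| <= theta * linf u.
  by rewrite normrM gtr0_norm // ler_pM2l // linf_ge.
have := optimistic_step (X := fun i => theta * l i) (Y := fun i => theta * lh i)
  p_gt0 p_sum1 (mulr_ge0 (ltW theta_gt0) (linf_ge0 l))
  (mulr_ge0 (ltW theta_gt0) (linf_ge0 (fun i => l i - lh i))) (scaled_bound l)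
  (fun i => ltac:(by rewrite -mulrBr; exact: (scaled_bound (fun i => l i - lh i)))).
rewrite hfunZ !normalize_expmul // !KLE relent_tilt_r // inner_subr.
rewrite [theta * (_ - _)]mulrBr -!meanZ meanN.
lra.
Qed.

End ONES.

Theorem corollary3 (R : realType) (n : nat) (theta : R) (wt1 : 'I_n.+1 -> R)
    (ell ellhat : nat -> 'I_n.+1 -> R) :
  0 < theta ->
  in_simplex wt1 -> (forall i, 0 < wt1 i) ->
  forall (T : nat) (w : 'I_n.+1 -> R), (1 <= T)%N -> in_simplex w ->
  \sum_(1 <= t < T.+1)
     inner (ell t) (fun i => wpred theta wt1 ell ellhat t i - w i)
  <= theta^-1 * KL w wt1
     + theta / 2 * \sum_(1 <= t < T.+1) hfun (linf (ell t)) (linf (fun i => ell t i - ellhat t i)).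
Proof.
move=> theta_gt0 [_ wt1_sum1] wt1_gt0 T w _ [w_ge0 w_sum1].
set K := fun t => KL w (wtil theta wt1 ell t).
set h := fun t => hfun (linf (ell t)) (linf (fun i => ell t i - ellhat t i)).
have round t : (0 < t)%N ->
    theta * inner (ell t) (fun i => wpred theta wt1 ell ellhat t i - w i)
    <= K t - K t.+1 + theta ^+ 2 / 2 * h t.
  case: t => // t _; have [wt_gt0 wt_sum1] := wtil_aux_pos_sum1 theta ell t wt1_gt0 wt1_sum1.
  exact: ones_round_le.
have K_ge0 : 0 <= K T.+1.
  have [wt_gt0 wt_sum1] := wtil_aux_pos_sum1 theta ell T wt1_gt0 wt1_sum1.
  exact: relent_ge0.
have telescope : \sum_(1 <= t < T.+1) (K t - K t.+1) = K 1 - K T.+1.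
  by rewrite -opprB -telescope_sumr // -sumrN; apply: eq_bigr => t _; rewrite opprB.
have regret : theta * \sum_(1 <= t < T.+1)
      inner (ell t) (fun i => wpred theta wt1 ell ellhat t i - w i)
    <= \sum_(1 <= t < T.+1) (K t - K t.+1 + theta ^+ 2 / 2 * h t).
  by rewrite mulr_sumr; apply: ler_sum_nat => t /andP[t_gt0 _]; exact: round.
rewrite big_split /= telescope -mulr_sumr in regret.
rewrite -(ler_pM2l theta_gt0) mulrDr mulrA mulfV ?mul1r ?lt0r_neq0 // mulrA.
have -> : theta * (theta / 2) = theta ^+ 2 / 2 by rewrite expr2 mulrA.
by move: regret K_ge0; rewrite /K /h /=; lra.
Qed.
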